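(* Suppose a cube is inscribed in the unit sphere in $\mathbb{R}^3$ in such a way that two of its vertices lie at $(0,0,\pm1)$. Then the stereographic projection $S(x,y,z)=\frac{x}{1-z}+i\frac{y}{1-z}$ sends the remaining six vertices to the three vertices and the three midpoints of the sides of an equilateral triangle in $\mathbb{C}$. *)

From Stdlib Require Import Reals.
From Coquelicot Require Import Coquelicot.
Open Scope R_scope.

Definition pt : Type := (R * R * R)%type.

Definition px (p : pt) : R := fst (fst p).
Definition py (p : pt) : R := snd (fst p).
Definition pz (p : pt) : R := snd p.

Definition vadd (p q : pt) : pt := (px p + px q, py p + py q, pz p + pz q).
Definition vscal (a : R) (p : pt) : pt := (a * px p, a * py p, a * pz p).
Definition dot (p q : pt) : R := px p * px q + py p * py q + pz p * pz q.
Definition vnorm (p : pt) : R := sqrt (dot p p).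

Definition orthonormal (e1 e2 e3 : pt) : Prop :=
  dot e1 e1 = 1 /\ dot e2 e2 = 1 /\ dot e3 e3 = 1 /\
  dot e1 e2 = 0 /\ dot e1 e3 = 0 /\ dot e2 e3 = 0.

Definition sign (eps : R) : Prop := eps = 1 \/ eps = -1.

Definition is_cube_vertex_set (V : pt -> Prop) : Prop :=
  exists (c e1 e2 e3 : pt) (s : R),
    orthonormal e1 e2 e3 /\ 0 < s /\
    forall p, V p <->
      exists eps1 eps2 eps3, sign eps1 /\ sign eps2 /\ sign eps3 /\
        p = vadd c (vscal s (vadd (vscal eps1 e1)
                                (vadd (vscal eps2 e2) (vscal eps3 e3)))).

Definition inscribed_in_unit_sphere (V : pt -> Prop) : Prop :=
  forall p, V p -> vnorm p = 1.

Definition stereo (p : pt) : C :=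
  (px p / (1 - pz p), py p / (1 - pz p)).

Definition equilateral (a b c : C) : Prop :=
  a <> b /\ Cmod (a - b)%C = Cmod (b - c)%C /\ Cmod (b - c)%C = Cmod (c - a)%C.

Definition midpoint (a b : C) : C := ((a + b) / 2)%C.

From Pilot Require Import Defs.
From Stdlib Require Import Reals Lra Psatz.
From Coquelicot Require Import Coquelicot.
Open Scope R_scope.

(* Write the vertices as c + e1 f1 + e2 f2 + e3 f3 (e_i = +-1) with f_i pairwise
   orthogonal of common squared length r, oriented so that N = (0,0,1) is
   c + f1 + f2 + f3.  The vertex set is symmetric about c and lies on the unit
   sphere, so c is orthogonal to every offset v (compare |c + v| and |c - v|);
   hence c.N = |c|^2 = c.S, and S = (0,0,-1) = -N forces c = 0.  Then
   N = f1 + f2 + f3 gives r = 1/3 and every f_i has height f_i.N = 1/3.  The six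
   other vertices are N - 2 f_i at height 1/3 and 2 f_i - N at height -1/3;
   projection sends them to a_i = -3 (f_i)_xy and to 3/2 (f_i)_xy, the midpoint
   of the other two a_j since the a_i sum to 0.  The f_i being orthogonal, of
   equal length and at equal height, the a_i are equidistant. *)

Lemma pt_eq (p q : pt) : px p = px q -> py p = py q -> pz p = pz q -> p = q.
Proof. destruct p as [[x y] z], q as [[x' y'] z']; cbn; intros -> -> ->; reflexivity. Qed.

Lemma dot_comm p q : dot p q = dot q p.
Proof. unfold dot; ring. Qed.

Lemma dot_vaddl p q r : dot (vadd p q) r = dot p r + dot q r.
Proof. unfold dot, vadd; cbn; ring. Qed.

Lemma dot_vaddr p q r : dot p (vadd q r) = dot p q + dot p r.
Proof. unfold dot, vadd; cbn; ring. Qed.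

Lemma dot_vscal k l p q : dot (vscal k p) (vscal l q) = k * l * dot p q.
Proof. unfold dot, vscal; cbn; ring. Qed.

Lemma dot_self_ge0 p : 0 <= dot p p.
Proof. unfold dot; nra. Qed.

Lemma dot_self_eq0 p : dot p p = 0 -> p = (0, 0, 0).
Proof. unfold dot; intro H; apply pt_eq; cbn; nra. Qed.

Lemma dot_self_of_vnorm p : vnorm p = 1 -> dot p p = 1.
Proof.
  unfold vnorm; intro H.
  rewrite <- (sqrt_sqrt (dot p p)) by apply dot_self_ge0; rewrite H; ring.
Qed.

Lemma sign_sq e : Defs.sign e -> e * e = 1.
Proof. intros [-> | ->]; ring. Qed.

Lemma sign_mul a b : Defs.sign a -> Defs.sign b -> Defs.sign (a * b).
Proof. unfold Defs.sign; intros [-> | ->] [-> | ->]; [left | right | right | left]; ring. Qed.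

Lemma sign_opp a : Defs.sign a -> Defs.sign (- a).
Proof. unfold Defs.sign; intros [-> | ->]; [right | left]; ring. Qed.

Definition orthogonal_frame (f1 f2 f3 : pt) (r : R) : Prop :=
  dot f1 f1 = r /\ dot f2 f2 = r /\ dot f3 f3 = r /\
  dot f1 f2 = 0 /\ dot f1 f3 = 0 /\ dot f2 f3 = 0.

Lemma orthogonal_frame_vscal f1 f2 f3 r k1 k2 k3 r' :
  k1 * k1 * r = r' -> k2 * k2 * r = r' -> k3 * k3 * r = r' ->
  orthogonal_frame f1 f2 f3 r ->
  orthogonal_frame (vscal k1 f1) (vscal k2 f2) (vscal k3 f3) r'.
Proof.
  intros E1 E2 E3 (h11 & h22 & h33 & h12 & h13 & h23).
  repeat split; rewrite dot_vscal;
    [rewrite h11 | rewrite h22 | rewrite h33 | rewrite h12 | rewrite h13 | rewrite h23];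
    auto; ring.
Qed.

Definition cube_vertex (c f1 f2 f3 : pt) (e1 e2 e3 : R) : pt :=
  vadd c (vadd (vscal e1 f1) (vadd (vscal e2 f2) (vscal e3 f3))).

Definition cube_vertices (c f1 f2 f3 : pt) (p : pt) : Prop :=
  exists e1 e2 e3, Defs.sign e1 /\ Defs.sign e2 /\ Defs.sign e3 /\
    p = cube_vertex c f1 f2 f3 e1 e2 e3.

Lemma cube_vertex_set_frame V :
  is_cube_vertex_set V ->
  exists c f1 f2 f3 r, orthogonal_frame f1 f2 f3 r /\
    forall p, V p <-> cube_vertices c f1 f2 f3 p.
Proof.
  intros (c & e1 & e2 & e3 & s & He & _ & HV).
  exists c, (vscal s e1), (vscal s e2), (vscal s e3), (s * s); split.
  - apply (orthogonal_frame_vscal e1 e2 e3 1); [ring | ring | ring | exact He].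
  - intro p; rewrite HV; unfold cube_vertices.
    enough (E : forall a1 a2 a3,
               vadd c (vscal s (vadd (vscal a1 e1) (vadd (vscal a2 e2) (vscal a3 e3))))
               = cube_vertex c (vscal s e1) (vscal s e2) (vscal s e3) a1 a2 a3)
      by (setoid_rewrite E; reflexivity).
    intros; apply pt_eq; cbn; ring.
Qed.

Lemma cube_vertex_reorient c f1 f2 f3 a1 a2 a3 e1 e2 e3 :
  Defs.sign a1 -> Defs.sign a2 -> Defs.sign a3 ->
  cube_vertex c (vscal a1 f1) (vscal a2 f2) (vscal a3 f3) (e1 * a1) (e2 * a2) (e3 * a3)
  = cube_vertex c f1 f2 f3 e1 e2 e3.
Proof. intros [-> | ->] [-> | ->] [-> | ->]; apply pt_eq; cbn; ring. Qed.

Lemma cube_vertices_reorient c f1 f2 f3 a1 a2 a3 p :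
  Defs.sign a1 -> Defs.sign a2 -> Defs.sign a3 ->
  cube_vertices c f1 f2 f3 p <->
  cube_vertices c (vscal a1 f1) (vscal a2 f2) (vscal a3 f3) p.
Proof.
  intros s1 s2 s3; split; intros (e1 & e2 & e3 & t1 & t2 & t3 & ->).
  - exists (e1 * a1), (e2 * a2), (e3 * a3).
    repeat split; try apply sign_mul; auto.
    symmetry; apply cube_vertex_reorient; auto.
  - exists (e1 * a1), (e2 * a2), (e3 * a3).
    repeat split; try apply sign_mul; auto.
    rewrite <- (cube_vertex_reorient c f1 f2 f3 a1 a2 a3) by auto.
    rewrite !Rmult_assoc, (sign_sq a1), (sign_sq a2), (sign_sq a3) by auto.
    rewrite !Rmult_1_r; reflexivity.
Qed.

Lemma cube_frame_through V n :
  is_cube_vertex_set V -> V n ->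
  exists c f1 f2 f3 r, orthogonal_frame f1 f2 f3 r /\
    n = cube_vertex c f1 f2 f3 1 1 1 /\
    forall p, V p <-> cube_vertices c f1 f2 f3 p.
Proof.
  intros Hcube Hn.
  destruct (cube_vertex_set_frame V Hcube) as (c & f1 & f2 & f3 & r & Hf & HV).
  destruct (proj1 (HV n) Hn) as (a1 & a2 & a3 & s1 & s2 & s3 & En).
  exists c, (vscal a1 f1), (vscal a2 f2), (vscal a3 f3), r; split; [| split].
  - apply (orthogonal_frame_vscal f1 f2 f3 r); auto; rewrite sign_sq; auto; ring.
  - rewrite En, <- (cube_vertex_reorient c f1 f2 f3 a1 a2 a3) by auto.
    rewrite !sign_sq by auto; reflexivity.
  - intro p; rewrite HV; apply cube_vertices_reorient; auto.
Qed.

Lemma dot_center_antipodes c v :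
  dot (vadd c v) (vadd c v) = dot (vadd c (vscal (-1) v)) (vadd c (vscal (-1) v)) ->
  dot c (vadd c v) = dot c c.
Proof. unfold dot, vadd, vscal; cbn; intro; lra. Qed.

Lemma cube_center_origin V c f1 f2 f3 :
  (forall p, V p <-> cube_vertices c f1 f2 f3 p) ->
  inscribed_in_unit_sphere V -> V (0, 0, 1) -> V (0, 0, -1) ->
  c = (0, 0, 0).
Proof.
  intros HV Hunit HN HS.
  assert (Hcenter : forall p, V p -> dot c p = dot c c).
  { intros p Hp; destruct (proj1 (HV p) Hp) as (e1 & e2 & e3 & s1 & s2 & s3 & ->).
    assert (Hq : V (cube_vertex c f1 f2 f3 (- e1) (- e2) (- e3)))
      by (apply HV; exists (- e1), (- e2), (- e3); repeat split; auto using sign_opp).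
    apply dot_center_antipodes.
    rewrite dot_self_of_vnorm by (apply Hunit; apply HV; exists e1, e2, e3; auto).
    replace (vadd c _) with (cube_vertex c f1 f2 f3 (- e1) (- e2) (- e3))
      by (apply pt_eq; cbn; ring).
    rewrite dot_self_of_vnorm by (apply Hunit; exact Hq); reflexivity. }
  apply dot_self_eq0.
  pose proof (Hcenter _ HN) as EN; pose proof (Hcenter _ HS) as ES.
  unfold dot in EN, ES |- *; cbn in EN, ES |- *; lra.
Qed.

Lemma frame_heights f1 f2 f3 r :
  orthogonal_frame f1 f2 f3 r -> vadd f1 (vadd f2 f3) = (0, 0, 1) ->
  r = 1 / 3 /\ pz f1 = 1 / 3 /\ pz f2 = 1 / 3 /\ pz f3 = 1 / 3.
Proof.
  intros (h11 & h22 & h33 & h12 & h13 & h23) HN.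
  assert (Hz : forall f, pz f = dot f (vadd f1 (vadd f2 f3)))
    by (intro f; rewrite HN; unfold dot; cbn; ring).
  assert (Hr : 3 * r = 1).
  { replace 1 with (pz (vadd f1 (vadd f2 f3))) by (rewrite HN; reflexivity).
    rewrite Hz, !dot_vaddl, !dot_vaddr, (dot_comm f2 f1), (dot_comm f3 f1), (dot_comm f3 f2).
    lra. }
  rewrite !Hz, !dot_vaddr, (dot_comm f2 f1), (dot_comm f3 f1), (dot_comm f3 f2).
  lra.
Qed.

Definition proj_xy (p : pt) : C := (px p, py p).

Lemma Cmod_proj_xy_sub p q :
  pz p = pz q -> Cmod (proj_xy p - proj_xy q) = sqrt (dot p p + dot q q - 2 * dot p q).
Proof. intro E; unfold Cmod, dot; cbn; rewrite E; f_equal; ring. Qed.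

Lemma equilateral_proj_xy f1 f2 f3 r :
  orthogonal_frame f1 f2 f3 r -> 0 < r -> pz f1 = pz f2 -> pz f2 = pz f3 ->
  equilateral (proj_xy f1) (proj_xy f2) (proj_xy f3).
Proof.
  intros (h11 & h22 & h33 & h12 & h13 & h23) Hr E12 E23.
  assert (Hside : forall f g, dot f f = r -> dot g g = r -> dot f g = 0 -> pz f = pz g ->
                    Cmod (proj_xy f - proj_xy g) = sqrt (2 * r)).
  { intros f g hf hg hfg E; rewrite Cmod_proj_xy_sub, hf, hg, hfg by exact E; f_equal; ring. }
  split; [| split].
  - intro E; injection E as Ex Ey.
    unfold dot in h11, h12; rewrite <- Ex, <- Ey, <- E12 in h12; lra.
  - rewrite !Hside; auto.
  - rewrite !Hside; auto; [rewrite dot_comm; exact h13 | congruence].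
Qed.

Lemma stereo_upper f :
  pz f = 1 / 3 -> stereo (vadd (0, 0, 1) (vscal (-2) f)) = proj_xy (vscal (-3) f).
Proof.
  intro h; unfold stereo, proj_xy, vadd, vscal; cbn; rewrite h.
  apply injective_projections; cbn; field.
Qed.

Lemma stereo_lower f :
  pz f = 1 / 3 -> stereo (vadd (vscal 2 f) (0, 0, -1)) = proj_xy (vscal (3 / 2) f).
Proof.
  intro h; unfold stereo, proj_xy, vadd, vscal; cbn; rewrite h.
  apply injective_projections; cbn; field.
Qed.

Lemma midpoint_proj_xy f g h :
  px f + px g + px h = 0 -> py f + py g + py h = 0 ->
  midpoint (proj_xy (vscal (-3) f)) (proj_xy (vscal (-3) g)) = proj_xy (vscal (3 / 2) h).
Proof.
  intros Hx Hy; unfold midpoint, proj_xy, vscal, Cdiv, Cmult, Cinv, Cplus, RtoC; cbn.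
  apply injective_projections; cbn; field_simplify; lra.
Qed.

Ltac solve_pt_eq := apply pt_eq; cbn in *; lra.

Definition off_pole_vertex (f1 f2 f3 p : pt) : Prop :=
  p = vadd (0, 0, 1) (vscal (-2) f1) \/ p = vadd (0, 0, 1) (vscal (-2) f2) \/
  p = vadd (0, 0, 1) (vscal (-2) f3) \/ p = vadd (vscal 2 f3) (0, 0, -1) \/
  p = vadd (vscal 2 f1) (0, 0, -1) \/ p = vadd (vscal 2 f2) (0, 0, -1).

Lemma cube_vertices_off_poles f1 f2 f3 p :
  vadd f1 (vadd f2 f3) = (0, 0, 1) ->
  pz f1 = 1 / 3 -> pz f2 = 1 / 3 -> pz f3 = 1 / 3 ->
  cube_vertices (0, 0, 0) f1 f2 f3 p /\ p <> (0, 0, 1) /\ p <> (0, 0, -1) <->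
  off_pole_vertex f1 f2 f3 p.
Proof.
  destruct f1 as [[x1 y1] z1], f2 as [[x2 y2] z2], f3 as [[x3 y3] z3].
  unfold cube_vertices, off_pole_vertex, cube_vertex, vadd, vscal, Defs.sign; cbn.
  intros HN h1 h2 h3; injection HN as Hx Hy _.
  split.
  - intros ((e1 & e2 & e3 & s1 & s2 & s3 & ->) & HnN & HnS).
    destruct s1 as [-> | ->], s2 as [-> | ->], s3 as [-> | ->];
      first [ contradict HnN; solve_pt_eq | contradict HnS; solve_pt_eq
            | repeat (first [left; solve_pt_eq | right]); solve_pt_eq ].
  - intro Hp.
    assert (Hz : pz p = 1 / 3 \/ pz p = - (1 / 3))
      by (destruct Hp as [-> | [-> | [-> | [-> | [-> | ->]]]]]; cbn; lra).
    split; [| split; intros ->; cbn in Hz; lra].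
    destruct Hp as [-> | [-> | [-> | [-> | [-> | ->]]]]];
      [exists (-1), 1, 1 | exists 1, (-1), 1 | exists 1, 1, (-1)
      | exists (-1), (-1), 1 | exists 1, (-1), (-1) | exists (-1), 1, (-1)];
      repeat split; auto; solve_pt_eq.
Qed.

Lemma stereo_cube_off_poles V f1 f2 f3 w :
  (forall p, V p <-> cube_vertices (0, 0, 0) f1 f2 f3 p) ->
  vadd f1 (vadd f2 f3) = (0, 0, 1) ->
  pz f1 = 1 / 3 -> pz f2 = 1 / 3 -> pz f3 = 1 / 3 ->
  (exists p, V p /\ p <> (0, 0, 1) /\ p <> (0, 0, -1) /\ stereo p = w) <->
  (w = proj_xy (vscal (-3) f1) \/ w = proj_xy (vscal (-3) f2) \/ w = proj_xy (vscal (-3) f3) \/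
   w = midpoint (proj_xy (vscal (-3) f1)) (proj_xy (vscal (-3) f2)) \/
   w = midpoint (proj_xy (vscal (-3) f2)) (proj_xy (vscal (-3) f3)) \/
   w = midpoint (proj_xy (vscal (-3) f3)) (proj_xy (vscal (-3) f1))).
Proof.
  intros HV HN h1 h2 h3.
  assert (Hx : px f1 + (px f2 + px f3) = 0) by exact (f_equal px HN).
  assert (Hy : py f1 + (py f2 + py f3) = 0) by exact (f_equal py HN).
  rewrite (midpoint_proj_xy f1 f2 f3), (midpoint_proj_xy f2 f3 f1),
    (midpoint_proj_xy f3 f1 f2) by lra.
  rewrite <- (stereo_upper f1), <- (stereo_upper f2), <- (stereo_upper f3),
    <- (stereo_lower f1), <- (stereo_lower f2), <- (stereo_lower f3) by assumption.
  split.
  - intros (p & Hp & HnN & HnS & <-); apply HV in Hp.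
    destruct (proj1 (cube_vertices_off_poles f1 f2 f3 p HN h1 h2 h3) (conj Hp (conj HnN HnS)))
      as [-> | [-> | [-> | [-> | [-> | ->]]]]]; intuition.
  - assert (Hq : forall q, stereo q = w -> off_pole_vertex f1 f2 f3 q ->
              exists p, V p /\ p <> (0, 0, 1) /\ p <> (0, 0, -1) /\ stereo p = w).
    { intros q Ew Hq.
      destruct (proj2 (cube_vertices_off_poles f1 f2 f3 q HN h1 h2 h3) Hq) as (Hv & HnN & HnS).
      exists q; rewrite HV; auto. }
    intros [-> | [-> | [-> | [-> | [-> | ->]]]]];
      (eapply Hq; [reflexivity | unfold off_pole_vertex; intuition]).
Qed.

Theorem lemma3p8 (V : pt -> Prop) :
  is_cube_vertex_set V ->
  inscribed_in_unit_sphere V ->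
  V (0, 0, 1) -> V (0, 0, -1) ->
  exists a b c : C,
    equilateral a b c /\
    forall w : C,
      (exists p, V p /\ p <> (0, 0, 1) /\ p <> (0, 0, -1) /\ stereo p = w) <->
      (w = a \/ w = b \/ w = c \/
       w = midpoint a b \/ w = midpoint b c \/ w = midpoint c a).
Proof.
  intros Hcube Hunit HN HS.
  destruct (cube_frame_through V (0, 0, 1) Hcube HN) as (c & f1 & f2 & f3 & r & Hf & EN & HV).
  pose proof (cube_center_origin V c f1 f2 f3 HV Hunit HN HS); subst c.
  assert (Hsum : vadd f1 (vadd f2 f3) = (0, 0, 1)) by (rewrite EN; apply pt_eq; cbn; ring).
  destruct (frame_heights f1 f2 f3 r Hf Hsum) as (-> & h1 & h2 & h3).
  exists (proj_xy (vscal (-3) f1)), (proj_xy (vscal (-3) f2)), (proj_xy (vscal (-3) f3)); split.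
  - apply (equilateral_proj_xy _ _ _ 3); cbn; try lra.
    apply (orthogonal_frame_vscal f1 f2 f3 (1 / 3)); auto; field.
  - intro w; apply stereo_cube_off_poles; assumption.
Qed.
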